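(* Any sequential MTTKRP algorithm, executed in the two-level memory model with fast memory of size $M$, performs at least \[ \frac{1}{3^{2-1/N}}\,\frac{N I R}{M^{1-1/N}} - M \] loads and stores.
   Context: MTTKRP: Fix integers $N\ge 2$, $I_1,\dots,I_N\ge1$, $R\ge1$, and a mode $n\in[N]$; let $I=I_1I_2\cdots I_N$. Values come from an arbitrary nonempty set equipped with two binary operations written $+$ and $\cdot$ (no algebraic laws assumed). Inputs are an $N$-way tensor $\mathcal{X}$ of dimensions $I_1\times\cdots\times I_N$ and matrices $A^{(k)}$ of size $I_k\times R$ for $k\in[N]\setminus\{n\}$; the output is the $I_n\times R$ matrix $B^{(n)}$ with $B^{(n)}(i_n,r)=\sum \mathcal{X}(i_1,\dots,i_N)\prod_{k\ne n}A^{(k)}(i_k,r)$, the sum over all $(i_1,\dots,i_N)$ with $n$-th entry $i_n$. An MTTKRP algorithm must, for each point $(i_1,\dots,i_N,r)$ of the iteration space $[I_1]\times\cdots\times[I_N]\times[R]$ (of size $IR$), perform one atomic $N$-ary multiply of $\mathcal{X}(i_1,\dots,i_N)$ and the $A^{(k)}(i_k,r)$, $k\neq n$, and accumulate these products into $B^{(n)}(i_n,r)$ by binary additions. Sequential model: one processor, a fast memory holding at most $M$ values and an unbounded slow memory; arithmetic operands and results must reside in fast memory; communication consists of loads (copy a value from slow to fast memory) and stores (fast to slow); inputs start and outputs end in slow memory. *)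

From Stdlib Require Import Arith Bool List Permutation Reals.
Import ListNotations.

(* Symbolic values.  Since no algebraic law is assumed on (+, .), we take  *)
(* the free (term) model: every value is a syntactic term over the inputs. *)
(* All indices are 0-based.                                                 *)
Inductive term : Type :=
  | XLeaf (i : list nat)
  | ALeaf (k j r : nat)             (* A^(k)(j, r)                  *)
  | TMul  (ts : list term)          (* atomic multi-ary multiply    *)
  | TAdd  (t1 t2 : term).

(* Slow-memory addresses: inputs, outputs B(j,r), and unbounded scratch. *)
Inductive addr : Type :=
  | AX (i : list nat)
  | AA (k j r : nat)
  | AB (j r : nat)
  | AS (s : nat).

(* Instructions of the sequential two-level machine.  Fast memory has M slots
   0..M-1 (so it holds at most M values); slow memory is unbounded. *)
Inductive instr : Type :=
  | ILoad  (a : addr) (d : nat)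
  | IStore (s : nat) (a : addr)
  | IMul   (ss : list nat) (d : nat)
  | IAdd   (s1 s2 : nat) (d : nat).

Definition fastmem := nat -> option term.
Definition slowmem := addr -> option term.

Definition addr_eq_dec (a b : addr) : {a = b} + {a <> b}.
Proof. decide equality; try apply Nat.eq_dec; apply list_eq_dec, Nat.eq_dec. Defined.

Definition upd_fast (f : fastmem) (d : nat) (v : term) : fastmem :=
  fun x => if Nat.eq_dec x d then Some v else f x.
Definition upd_slow (g : slowmem) (a : addr) (v : term) : slowmem :=
  fun x => if addr_eq_dec x a then Some v else g x.

Fixpoint read_slots (f : fastmem) (ss : list nat) : option (list term) :=
  match ss with
  | [] => Some []
  | s :: ss' =>
      match f s, read_slots f ss' with
      | Some v, Some vs => Some (v :: vs)
      | _, _ => None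
      end
  end.

Definition step (M : nat) (st : fastmem * slowmem) (c : instr)
  : option (fastmem * slowmem * option (list term)) :=
  let (f, g) := st in
  match c with
  | ILoad a d =>
      if d <? M then
        match g a with Some v => Some (upd_fast f d v, g, None) | None => None end
      else None
  | IStore s a =>
      match f s with Some v => Some (f, upd_slow g a v, None) | None => None end
  | IMul ss d =>
      if d <? M then
        match read_slots f ss with
        | Some vs => Some (upd_fast f d (TMul vs), g, Some vs)
        | None => None
        end
      else None
  | IAdd s1 s2 d =>
      if d <? M then
        match f s1, f s2 with
        | Some v1, Some v2 => Some (upd_fast f d (TAdd v1 v2), g, None)
        | _, _ => None
        end
      else None
  end.

Fixpoint run (M : nat) (st : fastmem * slowmem) (P : list instr)
  : option (fastmem * slowmem * list (list term)) :=
  match P with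
  | [] => Some (st, [])
  | c :: P' =>
      match step M st c with
      | None => None
      | Some (st', om) =>
          match run M st' P' with
          | None => None
          | Some (st'', ms) =>
              Some (st'', match om with Some m => m :: ms | None => ms end)
          end
      end
  end.

Definition is_comm (c : instr) : bool :=
  match c with ILoad _ _ | IStore _ _ => true | _ => false end.
Definition comm_cost (P : list instr) : nat := length (filter is_comm P).

(* The MTTKRP problem: dims Is = [I_1;...;I_N] (N = length Is), mode n      *)
(* (0-based, n < N), rank Rk.                                               *)
Definition prodn (l : list nat) : nat := fold_right Nat.mul 1 l.

Fixpoint tuples (Is : list nat) : list (list nat) :=
  match Is with
  | [] => [[]]
  | d :: ds => flat_map (fun x => map (cons x) (tuples ds)) (seq 0 d)
  end.

Definition valid_index (Is i : list nat) : bool :=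
  (length i =? length Is) &&
  forallb (fun k => nth k i 0 <? nth k Is 0) (seq 0 (length Is)).

Definition points (Is : list nat) (Rk : nat) : list (list nat * nat) :=
  flat_map (fun i => map (fun r => (i, r)) (seq 0 Rk)) (tuples Is).

Definition points_at (Is : list nat) (n Rk j r : nat) : list (list nat * nat) :=
  filter (fun p => (nth n (fst p) 0 =? j) && (snd p =? r)) (points Is Rk).

Definition operands (Is : list nat) (n : nat) (p : list nat * nat) : list term :=
  XLeaf (fst p) ::
  map (fun k => ALeaf k (nth k (fst p) 0) (snd p))
      (filter (fun k => negb (k =? n)) (seq 0 (length Is))).

Definition is_product (Is : list nat) (n : nat) (p : list nat * nat) (t : term)
  : Prop :=
  exists ts, t = TMul ts /\ Permutation ts (operands Is n p).

Fixpoint summands (t : term) : list term :=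
  match t with
  | TAdd a b => summands a ++ summands b
  | _ => [t]
  end.

Definition sum_of_products (Is : list nat) (n : nat)
    (ps : list (list nat * nat)) (t : term) : Prop :=
  exists qs, Permutation qs ps /\ Forall2 (is_product Is n) qs (summands t).

Definition init_slow (Is : list nat) (n Rk : nat) : slowmem :=
  fun a =>
    match a with
    | AX i => if valid_index Is i then Some (XLeaf i) else None
    | AA k j r =>
        if (k <? length Is) && negb (k =? n) && (j <? nth k Is 0) && (r <? Rk)
        then Some (ALeaf k j r) else None
    | _ => None
    end.

Definition init_fast : fastmem := fun _ => None.

Definition is_mttkrp_alg (Is : list nat) (n Rk M : nat) (P : list instr) : Prop :=
  exists f g ms,
    run M (init_fast, init_slow Is n Rk) P = Some (f, g, ms) /\
    (exists qs, Permutation qs (points Is Rk) /\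
                Forall2 (fun q m => Permutation m (operands Is n q)) qs ms) /\
    (forall j r, j < nth n Is 0 -> r < Rk ->
       exists t, g (AB j r) = Some t /\ sum_of_products Is n (points_at Is n Rk j r) t).

From Stdlib Require Import Arith List Reals Lia Lra Permutation ClassicalEpsilon.
Import ListNotations.

(* Cut the execution into segments of M loads and stores.  A multiply at a point (i, r) inside a
   segment needs X(i) and every A^(k)(i_k, r), k <> n, in fast memory at the start of the segment
   or loaded during it; and since its product must reach B(i_n, r), it survives the segment inside
   a partial sum of B(i_n, r) that is in fast memory at the end or stored during the segment (it
   cannot sit in slow memory earlier).  A partial sum determines (i_n, r), so the segment meets at
   most 3M of the projections (k, i_k, r) of its points.  For a fixed r the points number at most
   the product of the sizes of their N projections, hence by AM-GM at most (s/N)^N for s the total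
   number of projections, and also at most 3M (the X values); thus at most (3M)^(1-1/N) s/N.
   Summing over r, a segment performs at most (3M)^(1-1/N) 3M/N of the I R multiplies. *)

Lemma NoDup_flat_map {A B} (f : A -> list B) (l : list A) :
  NoDup l -> (forall x, In x l -> NoDup (f x)) ->
  (forall x y z, In x l -> In y l -> In z (f x) -> In z (f y) -> x = y) ->
  NoDup (flat_map f l).
Proof.
  induction l as [|a l IH]; simpl; intros Hl Hf Hdisj; [constructor|].
  inversion Hl as [|? ? Ha Hl']; subst.
  apply NoDup_app; [auto| |].
  - apply IH; auto. intros x y z Hx Hy. apply Hdisj; auto.
  - intros z Hz Hz'. apply in_flat_map in Hz' as [y [Hy Hzy]].
    assert (a = y) by (apply (Hdisj a y z); auto). subst. contradiction.
Qed.

Lemma NoDup_map_cons {A} (x : A) (l : list (list A)) : NoDup l -> NoDup (map (cons x) l).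
Proof. apply FinFun.Injective_map_NoDup. intros ? ? E. now inversion E. Qed.

Lemma NoDup_length_le_of_cover {A B} (R : B -> A -> Prop) (D : list A) (L : list B) :
  NoDup D -> (forall y a a', R y a -> R y a' -> a = a') ->
  (forall a, In a D -> exists y, In y L /\ R y a) ->
  length D <= length L.
Proof.
  destruct D as [|a0 D]; [simpl; lia|]. intros HD Hfun Hcov.
  set (key y := epsilon (inhabits a0) (R y)).
  rewrite <- (length_map key L). apply NoDup_incl_length; auto.
  intros a Ha. destruct (Hcov a Ha) as [y [Hy HR]]. apply in_map_iff. exists y. split; auto.
  apply (Hfun y); auto. apply (epsilon_spec (inhabits a0) (R y)). eauto.
Qed.

Lemma NoDup_app_disjoint {A} (l1 l2 : list A) x : NoDup (l1 ++ l2) -> In x l1 -> ~ In x l2.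
Proof.
  induction l1 as [|a l1 IH]; simpl; intros Hnd Hx; [easy|]. inversion Hnd as [|? ? Ha Hnd']; subst.
  destruct Hx as [->|Hx]; [|auto]. intros H. apply Ha, in_or_app. now right.
Qed.

Lemma Forall2_in_l {A B} (R : A -> B -> Prop) l1 l2 x :
  Forall2 R l1 l2 -> In x l1 -> exists y, In y l2 /\ R x y.
Proof. induction 1; simpl; [intros []|intros [->|Hx]]; eauto. destruct (IHForall2 Hx) as [z [? ?]]; eauto. Qed.

Lemma Forall2_in_r {A B} (R : A -> B -> Prop) l1 l2 y :
  Forall2 R l1 l2 -> In y l2 -> exists x, In x l1 /\ R x y.
Proof. induction 1; simpl; [intros []|intros [->|Hy]]; eauto. destruct (IHForall2 Hy) as [z [? ?]]; eauto. Qed.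

Fixpoint prodlist (Ss : list (list nat)) : list (list nat) :=
  match Ss with
  | [] => [[]]
  | xs :: Ss' => flat_map (fun x => map (cons x) (prodlist Ss')) xs
  end.

Lemma In_prodlist Ss i :
  In i (prodlist Ss) <->
  length i = length Ss /\ forall k, k < length Ss -> In (nth k i 0) (nth k Ss []).
Proof.
  revert i; induction Ss as [|xs Ss IH]; intros i; simpl.
  - split; [intros [<-|[]]; split; [reflexivity|lia]|].
    intros [Hi _]. destruct i; [auto|discriminate].
  - rewrite in_flat_map. split.
    + intros [x [Hx Hi]]. apply in_map_iff in Hi as [i' [<- Hi']].
      apply IH in Hi' as [Hlen Hnth]. simpl. split; [lia|].
      intros [|k] Hk; [assumption|apply Hnth; lia].
    + destruct i as [|x i]; simpl; [intros [? _]; discriminate|].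
      intros [Hlen Hnth]. exists x. split; [apply (Hnth 0); lia|].
      apply in_map, IH. split; [lia|]. intros k Hk. apply (Hnth (S k)); lia.
Qed.

Lemma length_prodlist Ss : length (prodlist Ss) = prodn (map (@length nat) Ss).
Proof.
  induction Ss as [|xs Ss IH]; simpl; [reflexivity|].
  rewrite (flat_map_constant_length (c := length (prodlist Ss))).
  - now rewrite IH.
  - intros. apply length_map.
Qed.

Lemma NoDup_prodlist Ss : Forall (@NoDup nat) Ss -> NoDup (prodlist Ss).
Proof.
  induction 1 as [|xs Ss Hxs _ IH]; simpl; [repeat constructor; auto|].
  apply NoDup_flat_map; auto.
  - intros x _. now apply NoDup_map_cons.
  - intros x y z _ _ Hx Hy.
    apply in_map_iff in Hx as [a [<- _]]. apply in_map_iff in Hy as [b [E _]]. now inversion E.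
Qed.

Lemma tuples_prodlist Is : tuples Is = prodlist (map (seq 0) Is).
Proof. induction Is as [|d Is IH]; simpl; [reflexivity|]. now rewrite IH. Qed.

Lemma In_tuples Is i :
  In i (tuples Is) <-> length i = length Is /\ forall k, k < length Is -> nth k i 0 < nth k Is 0.
Proof.
  rewrite tuples_prodlist, In_prodlist, length_map.
  assert (Hnth : forall k, nth k (map (seq 0) Is) [] = seq 0 (nth k Is 0))
    by (intros k; exact (map_nth (seq 0) Is 0 k)).
  split; intros [Hlen H]; split; auto; intros k Hk; specialize (H k Hk); rewrite Hnth, in_seq in *; lia.
Qed.

Lemma NoDup_tuples Is : NoDup (tuples Is).
Proof.
  rewrite tuples_prodlist. apply NoDup_prodlist, Forall_forall.
  intros xs Hxs. apply in_map_iff in Hxs as [d [<- _]]. apply seq_NoDup.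
Qed.

Lemma length_tuples Is : length (tuples Is) = prodn Is.
Proof.
  rewrite tuples_prodlist, length_prodlist, map_map.
  induction Is as [|d Is IH]; simpl; [reflexivity|]. now rewrite length_seq, IH.
Qed.

Lemma In_points Is Rk p : In p (points Is Rk) <-> In (fst p) (tuples Is) /\ snd p < Rk.
Proof.
  unfold points. rewrite in_flat_map. split.
  - intros [i [Hi Hp]]. apply in_map_iff in Hp as [r [<- Hr]]. apply in_seq in Hr. simpl; split; [auto|lia].
  - destruct p as [i r]; simpl; intros [Hi Hr]. exists i. split; [auto|]. apply in_map, in_seq; lia.
Qed.

Lemma NoDup_points Is Rk : NoDup (points Is Rk).
Proof.
  unfold points. apply NoDup_flat_map; [apply NoDup_tuples| |].
  - intros i _. apply FinFun.Injective_map_NoDup; [|apply seq_NoDup]. intros ? ? E. now inversion E.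
  - intros x y z _ _ Hx Hy. apply in_map_iff in Hx as [a [<- _]]. apply in_map_iff in Hy as [b [E _]].
    now inversion E.
Qed.

Lemma length_points Is Rk : length (points Is Rk) = prodn Is * Rk.
Proof.
  unfold points. rewrite (flat_map_constant_length (c := Rk)), length_tuples; [reflexivity|].
  intros. now rewrite length_map, length_seq.
Qed.

Lemma In_points_at Is n Rk j r q :
  In q (points_at Is n Rk j r) <-> In q (points Is Rk) /\ nth n (fst q) 0 = j /\ snd q = r.
Proof. unfold points_at. rewrite filter_In, Bool.andb_true_iff, !Nat.eqb_eq. tauto. Qed.

Open Scope R_scope.

Lemma prodn_le_exp_bound (m : R) (L : list nat) : 0 < m ->
  INR (prodn L) <= m ^ length L * exp (INR (list_sum L) / m - INR (length L)).
Proof.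
  intros Hm. induction L as [|y L IH]; simpl prodn; simpl list_sum; simpl length.
  - replace (INR 0 / m - INR 0) with 0 by (simpl; field; lra). rewrite exp_0. simpl; lra.
  - assert (Hy : INR y <= m * exp (INR y / m - 1)).
    { pose proof (exp_ineq1_le (INR y / m - 1)) as He.
      apply Rle_trans with (m * (1 + (INR y / m - 1))); [right; field; lra|].
      apply Rmult_le_compat_l; lra. }
    rewrite mult_INR, plus_INR, S_INR.
    replace ((INR y + INR (list_sum L)) / m - (INR (length L) + 1))
      with ((INR y / m - 1) + (INR (list_sum L) / m - INR (length L))) by (field; lra).
    rewrite exp_plus.
    replace (m ^ S (length L) * (exp (INR y / m - 1) * exp (INR (list_sum L) / m - INR (length L))))
      with ((m * exp (INR y / m - 1)) * (m ^ length L * exp (INR (list_sum L) / m - INR (length L))))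
      by (simpl; ring).
    apply Rmult_le_compat; auto using pos_INR.
Qed.

Lemma prodn_le_mean_pow (L : list nat) : L <> [] ->
  INR (prodn L) <= (INR (list_sum L) / INR (length L)) ^ length L.
Proof.
  intros HL. assert (Hlen : 0 < INR (length L)) by (apply lt_0_INR; destruct L; [easy|simpl; lia]).
  destruct (Nat.eq_dec (list_sum L) 0) as [E|E].
  - assert (prodn L = 0%nat) as ->.
    { destruct L as [|y L]; [easy|]. simpl in *. assert (y = 0%nat) as -> by lia. reflexivity. }
    rewrite E. simpl INR. apply pow_le. unfold Rdiv. lra.
  - assert (Hm : 0 < INR (list_sum L) / INR (length L)) by (apply Rdiv_lt_0_compat; auto; apply lt_0_INR; lia).
    pose proof (prodn_le_exp_bound _ L Hm) as H.
    replace (INR (list_sum L) / (INR (list_sum L) / INR (length L)) - INR (length L)) with 0 in H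
      by (field; split; [lra|apply not_0_INR; auto]).
    now rewrite exp_0, Rmult_1_r in H.
Qed.

Lemma le_pow_pred_mul (c u m : R) (N : nat) : 0 < u -> 0 <= m -> (1 <= N)%nat ->
  c <= u ^ N -> c <= m ^ N -> c <= u ^ (N - 1) * m.
Proof.
  intros Hu Hm HN Hcu Hcm. destruct N as [|N]; [lia|]. replace (S N - 1)%nat with N by lia.
  simpl in Hcu, Hcm. destruct (Rle_lt_dec u m).
  - rewrite Rmult_comm in Hcu. apply Rle_trans with (u ^ N * u); auto.
    apply Rmult_le_compat_l; [apply pow_le|]; lra.
  - rewrite Rmult_comm in Hcm. apply Rle_trans with (m ^ N * m); auto.
    apply Rmult_le_compat_r; [|apply pow_incr]; lra.
Qed.

Lemma pow_Rpower_inv (X : R) (N k : nat) : 0 < X -> (0 < N)%nat ->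
  Rpower X (/ INR N) ^ k = Rpower X (INR k / INR N).
Proof.
  intros HX HN. rewrite <- Rpower_pow by (unfold Rpower; apply exp_pos).
  rewrite Rpower_mult. f_equal. field. apply not_0_INR; lia.
Qed.

Lemma INR_list_sum_le_scaled {A} (f g : A -> nat) (K : R) (l : list A) :
  (forall x, In x l -> INR (f x) <= K * INR (g x)) ->
  INR (list_sum (map f l)) <= K * INR (list_sum (map g l)).
Proof.
  induction l as [|a l IH]; simpl; intros H; [lra|].
  rewrite !plus_INR, Rmult_plus_distr_l. apply Rplus_le_compat; auto.
Qed.

Close Scope R_scope.

(** * Counting points through their projections *)

Definition proj (k : nat) (W : list (list nat)) : list nat :=
  nodup Nat.eq_dec (map (fun i => nth k i 0) W).

Lemma length_le_prodn_proj (N : nat) (W : list (list nat)) :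
  NoDup W -> (forall i, In i W -> length i = N) ->
  length W <= prodn (map (fun k => length (proj k W)) (seq 0 N)).
Proof.
  intros HW Hlen. rewrite <- (map_map (fun k => proj k W) (@length nat)), <- length_prodlist.
  apply NoDup_incl_length; auto. intros i Hi. apply In_prodlist.
  rewrite length_map, length_seq. split; auto. intros k Hk.
  rewrite (nth_indep _ [] (proj 0 W)) by (rewrite length_map, length_seq; lia).
  rewrite (map_nth (fun k => proj k W) (seq 0 N) 0 k), seq_nth by lia.
  apply nodup_In. exact (in_map (fun i => nth k i 0) W i Hi).
Qed.

Open Scope R_scope.

Lemma length_le_proj_sum (N : nat) (u : R) (W : list (list nat)) :
  (1 <= N)%nat -> 0 < u -> NoDup W -> (forall i, In i W -> length i = N) ->
  INR (length W) <= u ^ N ->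
  INR (length W) <= u ^ (N - 1) / INR N * INR (list_sum (map (fun k => length (proj k W)) (seq 0 N))).
Proof.
  intros HN Hu HW Hlen HWu. set (L := map (fun k => length (proj k W)) (seq 0 N)).
  assert (HL : length L = N) by (unfold L; now rewrite length_map, length_seq).
  assert (HNr : 0 < INR N) by (apply lt_0_INR; lia).
  assert (Hmean : INR (length W) <= (INR (list_sum L) / INR N) ^ N).
  { apply Rle_trans with (INR (prodn L)).
    - apply le_INR, length_le_prodn_proj; auto.
    - rewrite <- HL. apply prodn_le_mean_pow. intros E. rewrite E in HL. simpl in HL. lia. }
  replace (u ^ (N - 1) / INR N * INR (list_sum L)) with (u ^ (N - 1) * (INR (list_sum L) / INR N))
    by (field; lra).
  apply le_pow_pred_mul; auto. unfold Rdiv. apply Rmult_le_pos; [apply pos_INR|left; now apply Rinv_0_lt_compat].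
Qed.

Close Scope R_scope.

Definition layer (V : list (list nat * nat)) (r : nat) : list (list nat) :=
  nodup (list_eq_dec Nat.eq_dec) (map fst (filter (fun p => snd p =? r) V)).

Definition ranks (V : list (list nat * nat)) : list nat := nodup Nat.eq_dec (map snd V).

Definition shadow (N : nat) (V : list (list nat * nat)) : list (nat * nat * nat) :=
  flat_map (fun r => flat_map (fun k => map (fun j => (k, j, r)) (proj k (layer V r))) (seq 0 N))
    (ranks V).

Lemma In_layer V r i : In i (layer V r) <-> In (i, r) V.
Proof.
  unfold layer. rewrite nodup_In, in_map_iff. split.
  - intros [[i' r'] [<- Hp]]. apply filter_In in Hp as [Hp E]. apply Nat.eqb_eq in E. simpl in *. now subst.
  - intros Hp. exists (i, r). split; auto. apply filter_In. split; auto. apply Nat.eqb_refl.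
Qed.

Lemma In_shadow N V k j r :
  In (k, j, r) (shadow N V) <-> k < N /\ exists p, In p V /\ nth k (fst p) 0 = j /\ snd p = r.
Proof.
  unfold shadow, ranks. rewrite in_flat_map. split.
  - intros [r' [_ H]]. apply in_flat_map in H as [k' [Hk H]]. apply in_map_iff in H as [j' [E Hj]].
    inversion E; subst. apply in_seq in Hk. split; [lia|].
    apply nodup_In, in_map_iff in Hj as [i [<- Hi]]. apply In_layer in Hi. exists (i, r); auto.
  - intros [Hk [[i r'] [Hp [Hj Hr]]]]. simpl in Hj, Hr. subst j r. exists r'. split.
    + apply nodup_In, in_map_iff. exists (i, r'); auto.
    + apply in_flat_map. exists k. split; [apply in_seq; lia|]. apply in_map_iff.
      exists (nth k i 0). split; [reflexivity|]. apply nodup_In, in_map_iff.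
      exists i. split; auto. now apply In_layer.
Qed.

Lemma NoDup_shadow N V : NoDup (shadow N V).
Proof.
  apply NoDup_flat_map; [apply NoDup_nodup| |].
  - intros r _. apply NoDup_flat_map; [apply seq_NoDup| |].
    + intros k _. apply FinFun.Injective_map_NoDup; [|apply NoDup_nodup]. intros ? ? E. now inversion E.
    + intros x y z _ _ Hx Hy. apply in_map_iff in Hx as [a [<- _]]. apply in_map_iff in Hy as [b [E _]].
      now inversion E.
  - intros x y [[k j] r] _ _ Hx Hy.
    apply in_flat_map in Hx as [? [_ Hx]]. apply in_flat_map in Hy as [? [_ Hy]].
    apply in_map_iff in Hx as [? [E1 _]]. apply in_map_iff in Hy as [? [E2 _]].
    inversion E1. inversion E2. congruence.
Qed.

Open Scope R_scope.

Lemma length_le_shadow (N : nat) (u : R) (V : list (list nat * nat)) :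
  (1 <= N)%nat -> 0 < u -> NoDup V -> (forall p, In p V -> length (fst p) = N) ->
  (forall r, INR (length (layer V r)) <= u ^ N) ->
  INR (length V) <= u ^ (N - 1) / INR N * INR (length (shadow N V)).
Proof.
  intros HN Hu HV Hlen Hlayer.
  apply Rle_trans with (INR (length (flat_map (fun r => map (fun i => (i, r)) (layer V r)) (ranks V)))).
  { apply le_INR, NoDup_incl_length; auto. intros [i r] Hp. apply in_flat_map. exists r. split.
    - apply nodup_In, in_map_iff. now exists (i, r).
    - apply in_map_iff. exists i. split; [reflexivity|]. now apply In_layer. }
  unfold shadow. rewrite !length_flat_map.
  apply INR_list_sum_le_scaled. intros r _. cbn beta. rewrite length_map, length_flat_map.
  rewrite (map_ext _ (fun k => length (proj k (layer V r)))) by (intros; apply length_map).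
  apply length_le_proj_sum; auto; [apply NoDup_nodup|].
  intros i Hi. apply In_layer in Hi. exact (Hlen _ Hi).
Qed.

Close Scope R_scope.

(** * Executions of the two-level machine *)

Definition option_to_list {A} (o : option A) : list A :=
  match o with Some x => [x] | None => [] end.

Inductive Step (M : nat) :
    fastmem * slowmem -> instr -> fastmem * slowmem -> option (list term) -> Prop :=
  | Step_load f g a d v : d < M -> g a = Some v ->
      Step M (f, g) (ILoad a d) (upd_fast f d v, g) None
  | Step_store f g s a v : f s = Some v ->
      Step M (f, g) (IStore s a) (f, upd_slow g a v) None
  | Step_mul f g ss d vs : d < M -> read_slots f ss = Some vs ->
      Step M (f, g) (IMul ss d) (upd_fast f d (TMul vs), g) (Some vs)
  | Step_add f g s1 s2 d v1 v2 : d < M -> f s1 = Some v1 -> f s2 = Some v2 ->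
      Step M (f, g) (IAdd s1 s2 d) (upd_fast f d (TAdd v1 v2), g) None.

Inductive Exec (M : nat) :
    fastmem * slowmem -> list instr -> fastmem * slowmem -> list (list term) -> Prop :=
  | Exec_nil st : Exec M st [] st []
  | Exec_cons st c st1 om P st2 ms : Step M st c st1 om -> Exec M st1 P st2 ms ->
      Exec M st (c :: P) st2 (option_to_list om ++ ms).

Lemma step_Step M st c st' om : step M st c = Some (st', om) -> Step M st c st' om.
Proof.
  destruct st as [f g]. destruct c; simpl; intros H.
  - destruct (d <? M) eqn:Ed; [|discriminate]. destruct (g a) eqn:Ea; [|discriminate].
    inversion H. apply Step_load; auto. now apply Nat.ltb_lt.
  - destruct (f s) eqn:Es; [|discriminate]. inversion H. now apply Step_store.
  - destruct (d <? M) eqn:Ed; [|discriminate]. destruct (read_slots f ss) eqn:Er; [|discriminate].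
    inversion H. apply Step_mul; auto. now apply Nat.ltb_lt.
  - destruct (d <? M) eqn:Ed; [|discriminate].
    destruct (f s1) eqn:E1; [|discriminate]. destruct (f s2) eqn:E2; [|discriminate].
    inversion H. apply Step_add; auto. now apply Nat.ltb_lt.
Qed.

Lemma run_Exec M st P st' ms : run M st P = Some (st', ms) -> Exec M st P st' ms.
Proof.
  revert st ms; induction P as [|c P IH]; simpl; intros st ms H.
  - inversion H. constructor.
  - destruct (step M st c) as [[st1 om]|] eqn:Es; [|discriminate].
    destruct (run M st1 P) as [[st2 ms2]|] eqn:E; [|discriminate]. inversion H; subst.
    replace (match om with Some m => m :: ms2 | None => ms2 end) with (option_to_list om ++ ms2)
      by (destruct om; reflexivity).
    econstructor; eauto using step_Step.
Qed.

Lemma Exec_app_inv M st P1 P2 st'' ms :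
  Exec M st (P1 ++ P2) st'' ms ->
  exists st' ms1 ms2, Exec M st P1 st' ms1 /\ Exec M st' P2 st'' ms2 /\ ms = ms1 ++ ms2.
Proof.
  revert st ms; induction P1 as [|c P1 IH]; simpl; intros st ms H.
  - exists st, [], ms. repeat split; auto. constructor.
  - inversion H as [|? ? st1 om ? ? ms' Hs HP]; subst.
    destruct (IH _ _ HP) as [st' [ms1 [ms2 [H1 [H2 ->]]]]].
    exists st', (option_to_list om ++ ms1), ms2. repeat split; auto.
    + econstructor; eauto.
    + now rewrite app_assoc.
Qed.

Definition is_mul (c : instr) : bool := match c with IMul _ _ => true | _ => false end.
Definition nmuls (P : list instr) : nat := length (filter is_mul P).

Lemma Exec_length M st P st' ms : Exec M st P st' ms -> length ms = nmuls P.
Proof.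
  unfold nmuls. induction 1 as [|? ? ? ? ? ? ? Hs _ IH]; [reflexivity|].
  destruct Hs; simpl; now rewrite IH.
Qed.

Lemma Exec_no_fast_memory st P st' ms : Exec 0 st P st' ms -> ms = [].
Proof. induction 1 as [|? ? ? ? ? ? ? Hs _ IH]; [reflexivity|]. destruct Hs; simpl; auto; lia. Qed.

Definition fast_bounded (M : nat) (st : fastmem * slowmem) : Prop :=
  forall s, M <= s -> fst st s = None.

Lemma Exec_fast_bounded M st P st' ms :
  Exec M st P st' ms -> fast_bounded M st -> fast_bounded M st'.
Proof.
  induction 1 as [|? ? ? ? ? ? ? Hs _ IH]; auto. intros Hb. apply IH.
  destruct Hs; intros s' Hs'; simpl; unfold upd_fast;
    try destruct (Nat.eq_dec s' d); try lia; apply (Hb s' Hs').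
Qed.

Definition inmem (st : fastmem * slowmem) (w : term) : Prop :=
  (exists s, fst st s = Some w) \/ (exists a, snd st a = Some w).

Lemma read_slots_inmem f ss vs u :
  read_slots f ss = Some vs -> In u vs -> exists s, f s = Some u.
Proof.
  revert vs; induction ss as [|s ss IH]; simpl; intros vs H Hu.
  - inversion H; subst. destruct Hu.
  - destruct (f s) eqn:E1; [|discriminate]. destruct (read_slots f ss) eqn:E2; [|discriminate].
    inversion H; subst. destruct Hu as [<-|Hu]; eauto.
Qed.

Lemma Step_inmem M st c st' om w :
  Step M st c st' om -> inmem st' w ->
  inmem st w \/ (exists vs, om = Some vs /\ w = TMul vs) \/
  (exists v1 v2, w = TAdd v1 v2 /\ inmem st v1 /\ inmem st v2).
Proof.
  unfold inmem. destruct 1; simpl; unfold upd_fast, upd_slow; intros [[s' Hs']|[a' Ha']]; eauto 7.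
  - destruct (Nat.eq_dec s' d) as [->|]; [inversion Hs'; subst|]; eauto.
  - destruct (addr_eq_dec a' a) as [->|]; [inversion Ha'; subst|]; eauto.
  - destruct (Nat.eq_dec s' d) as [->|]; [inversion Hs'; subst|]; eauto.
  - destruct (Nat.eq_dec s' d) as [->|].
    + inversion Hs'; subst. right; right. exists v1, v2. split; [reflexivity|]. split; left; eauto.
    + left; left; eauto.
Qed.

Definition products_recorded (st : fastmem * slowmem) (L : list (list term)) : Prop :=
  forall w vs, inmem st w -> In (TMul vs) (summands w) -> In vs L.

Lemma products_recorded_init Is n Rk : products_recorded (init_fast, init_slow Is n Rk) [].
Proof.
  intros w vs [[s Hs]|[a Ha]] Hin; simpl in *; [discriminate|].
  destruct a; simpl in Ha; try discriminate;
    match type of Ha with (if ?b then _ else _) = _ => destruct b end;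
    inversion Ha; subst; destruct Hin as [E|[]]; discriminate.
Qed.

Lemma Exec_products_recorded M st P st' ms L :
  Exec M st P st' ms -> products_recorded st L -> products_recorded st' (L ++ ms).
Proof.
  intros HE. revert L. induction HE as [st|st c st1 om P st2 ms Hs _ IH]; intros L HL.
  - now rewrite app_nil_r.
  - rewrite app_assoc. apply IH. intros w vs Hw Hin. apply in_or_app.
    destruct (Step_inmem _ _ _ _ _ _ Hs Hw) as [Hw'|[[vs' [-> ->]]|[v1 [v2 [-> [Hv1 Hv2]]]]]].
    + left. eapply HL; eauto.
    + right. destruct Hin as [E|[]]. inversion E. now left.
    + left. apply in_app_or in Hin as [Hin|Hin]; [apply (HL v1)|apply (HL v2)]; auto.
Qed.

Lemma Exec_trace_back M st P st' ms ts v :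
  Exec M st P st' ms -> ~ In ts ms -> inmem st' v -> In (TMul ts) (summands v) ->
  exists w, inmem st w /\ In (TMul ts) (summands w) /\ incl (summands w) (summands v).
Proof.
  intros HE. revert v. induction HE as [st|st c st1 om P st2 ms Hs _ IH]; intros v Hts Hv Hin.
  - exists v. repeat split; auto using incl_refl.
  - destruct (IH v) as [w1 [Hw1 [Hin1 Hincl1]]]; auto.
    { intros H. apply Hts, in_or_app. now right. }
    destruct (Step_inmem _ _ _ _ _ _ Hs Hw1) as [Hw|[[vs [-> ->]]|[v1 [v2 [-> [Hv1 Hv2]]]]]].
    + eauto.
    + destruct Hin1 as [E|[]]. inversion E; subst. exfalso. apply Hts. now left.
    + apply in_app_or in Hin1 as [Hin1|Hin1]; [exists v1|exists v2]; repeat split; auto;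
        intros x Hx; apply Hincl1, in_or_app; auto.
Qed.

Definition is_leaf (t : term) : Prop :=
  match t with XLeaf _ | ALeaf _ _ _ => True | _ => False end.

(* [Ld] collects the loaded values and [St] the stored ones. *)
Lemma Exec_traffic M st P st' ms :
  Exec M st P st' ms ->
  exists Ld St : list term,
    length Ld + length St <= comm_cost P /\
    (forall ts u, In ts ms -> In u ts -> is_leaf u -> (exists s, fst st s = Some u) \/ In u Ld) /\
    (forall a w, snd st' a = Some w -> snd st a = Some w \/ In w St).
Proof.
  unfold comm_cost.
  induction 1 as [st|st c st1 om P st2 ms Hs _ [Ld [St [Hlen [HLd HSt]]]]].
  - exists [], []. simpl. repeat split; [lia|intros ? ? []|auto].
  - destruct Hs as [f g a d v Hd Hv|f g s a v Hv|f g ss d vs Hd Hvs|f g s1 s2 d v1 v2 Hd _ _];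
      simpl in *.
    + exists (v :: Ld), St. simpl. repeat split; [lia| |auto].
      intros ts u Hts Hu Hleaf. destruct (HLd ts u Hts Hu Hleaf) as [[s' Hs']|Hin]; auto.
      unfold upd_fast in Hs'. destruct (Nat.eq_dec s' d); [inversion Hs'|]; eauto.
    + exists Ld, (v :: St). simpl. repeat split; [lia|auto|].
      intros a' w Hw. destruct (HSt a' w Hw) as [Hg|Hin]; [|auto].
      unfold upd_slow in Hg. destruct (addr_eq_dec a' a); [inversion Hg|]; auto.
    + exists Ld, St. repeat split; [lia| |auto].
      intros ts u [<-|Hts] Hu Hleaf; [left; eapply read_slots_inmem; eauto|].
      destruct (HLd ts u Hts Hu Hleaf) as [[s' Hs']|Hin]; auto.
      unfold upd_fast in Hs'. destruct (Nat.eq_dec s' d); [inversion Hs'; now subst|]; eauto.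
    + exists Ld, St. repeat split; [lia| |auto].
      intros ts u Hts Hu Hleaf. destruct (HLd ts u Hts Hu Hleaf) as [[s' Hs']|Hin]; auto.
      unfold upd_fast in Hs'. destruct (Nat.eq_dec s' d); [inversion Hs'; now subst|]; eauto.
Qed.

Lemma in_operands_X Is n p : In (XLeaf (fst p)) (operands Is n p).
Proof. now left. Qed.

Lemma in_operands_A Is n p k : k < length Is -> k <> n ->
  In (ALeaf k (nth k (fst p) 0) (snd p)) (operands Is n p).
Proof.
  intros Hk Hkn. right. apply in_map_iff. exists k. split; [reflexivity|].
  apply filter_In. split; [apply in_seq; lia|]. now apply Bool.negb_true_iff, Nat.eqb_neq.
Qed.

Lemma in_operands_inv Is n p t : In t (operands Is n p) ->
  t = XLeaf (fst p) \/ exists k, t = ALeaf k (nth k (fst p) 0) (snd p).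
Proof. intros [<-|H]; auto. apply in_map_iff in H as [k [<- _]]. eauto. Qed.

(* The [X] operand determines the multi-index, and any [A] operand (one exists as N >= 2) the rank index. *)
Lemma operands_inj Is n p q ts : 2 <= length Is -> n < length Is ->
  Permutation ts (operands Is n p) -> Permutation ts (operands Is n q) -> p = q.
Proof.
  intros HN Hn Hp Hq.
  assert (Hpq : forall t, In t (operands Is n p) -> In t (operands Is n q)).
  { intros t Ht. apply (Permutation_in _ Hq), (Permutation_in _ (Permutation_sym Hp)), Ht. }
  destruct p as [i r], q as [i' r'].
  destruct (in_operands_inv _ _ _ _ (Hpq _ (in_operands_X Is n (i, r)))) as [E1|[k E1]];
    inversion E1; subst.
  assert (Hk : exists k, k < length Is /\ k <> n) by (destruct n; [exists 1|exists 0]; lia).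
  destruct Hk as [k [Hk Hkn]].
  destruct (in_operands_inv _ _ _ _ (Hpq _ (in_operands_A Is n (i', r) k Hk Hkn))) as [E2|[k' E2]];
    inversion E2; subst; reflexivity.
Qed.

Lemma summands_neq_nil t : summands t <> [].
Proof. induction t; simpl; try easy. destruct (summands t1); easy. Qed.

Definition partial_output (Is : list nat) (n Rk j r : nat) (w : term) : Prop :=
  forall t, In t (summands w) -> exists q, In q (points_at Is n Rk j r) /\ is_product Is n q t.

Lemma partial_output_inj Is n Rk j r j' r' w : 2 <= length Is -> n < length Is ->
  partial_output Is n Rk j r w -> partial_output Is n Rk j' r' w -> j = j' /\ r = r'.
Proof.
  intros HN Hn Hw Hw'. destruct (summands w) as [|t ts] eqn:E; [now apply summands_neq_nil in E|].
  destruct (Hw t) as [q [Hq [vs [-> Hvs]]]]; [rewrite E; now left|].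
  destruct (Hw' (TMul vs)) as [q' [Hq' [vs' [E' Hvs']]]]; [rewrite E; now left|].
  inversion E'; subst vs'. rewrite <- (operands_inj _ _ _ _ _ HN Hn Hvs Hvs') in Hq'.
  apply In_points_at in Hq as [_ [<- <-]]. apply In_points_at in Hq' as [_ [<- <-]]. auto.
Qed.

Lemma partial_output_not_leaf Is n Rk j r k j' r' : ~ partial_output Is n Rk j r (ALeaf k j' r').
Proof. intros H. destruct (H (ALeaf k j' r')) as [q [_ [ts [E _]]]]; [now left|discriminate]. Qed.

(* [Lin] holds the values available as operands and [Lout] the places where partial results survive. *)
Lemma length_le_operand_cover Is n Rk (V : list (list nat * nat)) (Lin Lout : list (option term)) (u : R) :
  2 <= length Is -> n < length Is -> NoDup V -> incl V (points Is Rk) ->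
  (forall p, In p V ->
     In (Some (XLeaf (fst p))) Lin /\
     (forall k, k < length Is -> k <> n -> In (Some (ALeaf k (nth k (fst p) 0) (snd p))) Lin) /\
     exists w, In (Some w) Lout /\ partial_output Is n Rk (nth n (fst p) 0) (snd p) w) ->
  (0 < u)%R -> (INR (length Lin) <= u ^ length Is)%R ->
  (INR (length V) <= u ^ (length Is - 1) / INR (length Is) * INR (length Lin + length Lout))%R.
Proof.
  intros HN Hn HV HVp Hcov Hu HLin.
  assert (HNr : (0 < INR (length Is))%R) by (apply lt_0_INR; lia).
  apply Rle_trans with (u ^ (length Is - 1) / INR (length Is) * INR (length (shadow (length Is) V)))%R.
  - apply length_le_shadow; auto; [lia| |].
    + intros p Hp. apply HVp, In_points in Hp as [Hp _]. now apply In_tuples in Hp.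
    + intros r. apply Rle_trans with (INR (length Lin)); auto. apply le_INR.
      apply (NoDup_length_le_of_cover (fun y i => y = Some (XLeaf i))); [apply NoDup_nodup| |].
      * intros y i i' -> E. now inversion E.
      * intros i Hi. apply In_layer in Hi. exists (Some (XLeaf i)). split; auto. apply (Hcov _ Hi).
  - apply Rmult_le_compat_l.
    { unfold Rdiv. apply Rmult_le_pos; [apply pow_le; lra|left; now apply Rinv_0_lt_compat]. }
    apply le_INR. rewrite <- length_app.
    apply (NoDup_length_le_of_cover (fun y '(k, j, r) =>
      (k <> n /\ y = Some (ALeaf k j r)) \/
      (k = n /\ exists w, y = Some w /\ partial_output Is n Rk j r w))); [apply NoDup_shadow| |].
    + intros y [[k j] r] [[k' j'] r'] [[Hk ->]|[-> [w [-> Hw]]]] [[Hk' E]|[-> [w' [E Hw']]]];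
        inversion E; subst; auto.
      * exfalso. now apply partial_output_not_leaf in Hw'.
      * exfalso. now apply partial_output_not_leaf in Hw.
      * destruct (partial_output_inj _ _ _ _ _ _ _ _ HN Hn Hw Hw'). now subst.
    + intros [[k j] r] Hkjr. apply In_shadow in Hkjr as [Hk [p [Hp [Hj Hr]]]].
      destruct (Hcov p Hp) as [_ [HA [w [Hw Hpo]]]]. destruct (Nat.eq_dec k n) as [->|Hkn].
      * exists (Some w). split; [apply in_or_app; now right|]. right. subst. eauto.
      * exists (Some (ALeaf k j r)). split; [apply in_or_app; left; subst; now apply HA|]. now left.
Qed.

Lemma In_fast_contents M (st : fastmem * slowmem) s w :
  fast_bounded M st -> fst st s = Some w -> In (Some w) (map (fst st) (seq 0 M)).
Proof.
  intros Hb Hs. destruct (Nat.lt_ge_cases s M) as [Hlt|Hge]; [|now rewrite Hb in Hs].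
  rewrite <- Hs. apply in_map, in_seq. lia.
Qed.

(** * One segment of the execution *)

Section Segment.

Variables (Is : list nat) (n Rk M : nat).
Hypothesis HN : 2 <= length Is.
Hypothesis Hn : n < length Is.

Variables (st1 st2 st3 : fastmem * slowmem) (P2 P3 : list instr).
Variables (ms1 ms2 ms3 : list (list term)) (qs1 qs2 qs3 : list (list nat * nat)).
Hypothesis Hrec1 : products_recorded st1 ms1.
Hypothesis Hbnd1 : fast_bounded M st1.
Hypothesis E2 : Exec M st1 P2 st2 ms2.
Hypothesis E3 : Exec M st2 P3 st3 ms3.
Hypothesis Hqs : Permutation (qs1 ++ qs2 ++ qs3) (points Is Rk).
Hypothesis F1 : Forall2 (fun q m => Permutation m (operands Is n q)) qs1 ms1.
Hypothesis F2 : Forall2 (fun q m => Permutation m (operands Is n q)) qs2 ms2.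
Hypothesis F3 : Forall2 (fun q m => Permutation m (operands Is n q)) qs3 ms3.
Hypothesis Hout : forall j r, j < nth n Is 0 -> r < Rk ->
  exists t, snd st3 (AB j r) = Some t /\ sum_of_products Is n (points_at Is n Rk j r) t.

Lemma segment_points_NoDup : NoDup (qs2 ++ qs1 ++ qs3).
Proof.
  apply (Permutation_NoDup (Permutation_app_swap_app qs1 qs2 qs3)).
  apply (Permutation_NoDup (Permutation_sym Hqs)), NoDup_points.
Qed.

Lemma segment_point_in_points p : In p qs2 -> In p (points Is Rk).
Proof. intros Hp. apply (Permutation_in _ Hqs), in_or_app. right. now apply in_or_app; left. Qed.

(* Each point is multiplied exactly once, so the product of a point of this segment is computed
   neither before nor after it. *)
Lemma segment_product_not_elsewhere qs ms p ts :
  Forall2 (fun q m => Permutation m (operands Is n q)) qs ms -> incl qs (qs1 ++ qs3) ->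
  In p qs2 -> Permutation ts (operands Is n p) -> ~ In ts ms.
Proof.
  intros F Hincl Hp Hts Hin. destruct (Forall2_in_r _ _ _ _ F Hin) as [q [Hq Hqts]].
  rewrite (operands_inj _ _ _ _ _ HN Hn Hqts Hts) in Hq.
  exact (NoDup_app_disjoint _ _ p segment_points_NoDup Hp (Hincl p Hq)).
Qed.

Lemma segment_output p : In p qs2 ->
  exists w, inmem st2 w /\ (forall a, snd st1 a <> Some w) /\
    partial_output Is n Rk (nth n (fst p) 0) (snd p) w.
Proof.
  intros Hp. pose proof (segment_point_in_points p Hp) as Hpts.
  apply In_points in Hpts as [Hi Hr]. apply In_tuples in Hi as [_ Hi].
  destruct (Hout (nth n (fst p) 0) (snd p) (Hi n Hn) Hr) as [t [Ht [qs' [Hqs' Hsum]]]].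
  assert (Hpq : In p qs') by (apply (Permutation_in _ (Permutation_sym Hqs')), In_points_at;
    auto using segment_point_in_points).
  destruct (Forall2_in_l _ _ _ _ Hsum Hpq) as [t0 [Ht0 [ts [-> Hts]]]].
  destruct (Exec_trace_back _ _ _ _ _ ts t E3) as [w [Hw [Hwts Hincl]]]; auto.
  { apply (segment_product_not_elsewhere qs3 ms3 p); auto. intros q Hq. apply in_or_app; now right. }
  { right. eauto. }
  exists w. repeat split; auto.
  - intros a Ha. apply (segment_product_not_elsewhere qs1 ms1 p ts); auto.
    + intros q Hq. apply in_or_app; now left.
    + apply (Hrec1 w); auto. right. eauto.
  - intros t' Ht'. destruct (Forall2_in_r _ _ _ _ Hsum (Hincl t' Ht')) as [q [Hq Hqt]].
    exists q. split; auto. now apply (Permutation_in _ Hqs').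
Qed.

Lemma segment_leaves Ld :
  (forall ts u, In ts ms2 -> In u ts -> is_leaf u -> (exists s, fst st1 s = Some u) \/ In u Ld) ->
  forall p, In p qs2 ->
  In (Some (XLeaf (fst p))) (map (fst st1) (seq 0 M) ++ map Some Ld) /\
  (forall k, k < length Is -> k <> n ->
     In (Some (ALeaf k (nth k (fst p) 0) (snd p))) (map (fst st1) (seq 0 M) ++ map Some Ld)).
Proof.
  intros HLd p Hp. destruct (Forall2_in_l _ _ _ _ F2 Hp) as [ts [Hts Hperm]].
  assert (Hleaf : forall u, In u (operands Is n p) -> is_leaf u ->
            In (Some u) (map (fst st1) (seq 0 M) ++ map Some Ld)).
  { intros u Hu Hl. apply (Permutation_in _ (Permutation_sym Hperm)) in Hu.
    destruct (HLd ts u Hts Hu Hl) as [[s Hs]|HuLd]; apply in_or_app;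
      [left; eapply In_fast_contents; eauto|right; now apply in_map]. }
  split; [|intros k Hk Hkn]; apply Hleaf; [apply in_operands_X|exact I|now apply in_operands_A|exact I].
Qed.

Lemma segment_muls_le : 1 <= M -> comm_cost P2 <= M ->
  (INR (length ms2) <= Rpower (INR (3 * M)) (1 - / INR (length Is)) / INR (length Is) * INR (3 * M))%R.
Proof.
  intros HM Hcost. destruct (Exec_traffic _ _ _ _ _ E2) as [Ld [St [HLdSt [HLd HSt]]]].
  pose proof (Exec_fast_bounded _ _ _ _ _ E2 Hbnd1) as Hbnd2.
  set (Lin := map (fst st1) (seq 0 M) ++ map Some Ld).
  set (Lout := map (fst st2) (seq 0 M) ++ map Some St).
  (* At most [M] values sit in fast memory at either end of the segment. *)
  assert (Hlen : length Lin + length Lout <= 3 * M)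
    by (unfold Lin, Lout; rewrite !length_app, !length_map, !length_seq; lia).
  assert (H3M : (0 < INR (3 * M))%R) by (apply lt_0_INR; lia).
  assert (HNr : (0 < INR (length Is))%R) by (apply lt_0_INR; lia).
  set (u := Rpower (INR (3 * M)) (/ INR (length Is))).
  assert (HuN : (u ^ length Is = INR (3 * M))%R).
  { unfold u. rewrite pow_Rpower_inv by (auto; lia). rewrite Rdiv_diag by lra. now apply Rpower_1. }
  assert (HuN1 : (u ^ (length Is - 1) = Rpower (INR (3 * M)) (1 - / INR (length Is)))%R).
  { unfold u. rewrite pow_Rpower_inv by (auto; lia). f_equal. rewrite minus_INR by lia. simpl. field. lra. }
  rewrite <- (Forall2_length F2), <- HuN1.
  apply Rle_trans with (u ^ (length Is - 1) / INR (length Is) * INR (length Lin + length Lout))%R.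
  - apply (length_le_operand_cover Is n Rk); auto.
    + eapply NoDup_app_remove_r, segment_points_NoDup.
    + intros p Hp. now apply segment_point_in_points.
    + intros p Hp. destruct (segment_leaves Ld HLd p Hp) as [HX HA]. repeat split; auto.
      destruct (segment_output p Hp) as [w [[[s Hs]|[a Ha]] [Hnot Hw]]]; exists w; split; auto;
        unfold Lout; apply in_or_app.
      * left. eapply In_fast_contents; eauto.
      * right. apply in_map. destruct (HSt a w Ha) as [Ha1|]; [now apply Hnot in Ha1|auto].
    + unfold u, Rpower. apply exp_pos.
    + rewrite HuN. apply le_INR. lia.
  - apply Rmult_le_compat_l; [|apply le_INR; lia].
    unfold Rdiv. apply Rmult_le_pos; [apply pow_le; unfold u, Rpower; left; apply exp_pos|].
    left. now apply Rinv_0_lt_compat.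
Qed.

End Segment.

(** * Cutting the execution into segments of [M] loads and stores *)

Lemma comm_cost_app P Q : comm_cost (P ++ Q) = comm_cost P + comm_cost Q.
Proof. unfold comm_cost. now rewrite filter_app, length_app. Qed.

Lemma nmuls_app P Q : nmuls (P ++ Q) = nmuls P + nmuls Q.
Proof. unfold nmuls. now rewrite filter_app, length_app. Qed.

Lemma comm_cost_prefix P m : m <= comm_cost P -> exists Q Q', P = Q ++ Q' /\ comm_cost Q = m.
Proof.
  revert m; induction P as [|c P IH]; intros m Hm.
  - exists [], []. unfold comm_cost in *; simpl in *. split; [reflexivity|lia].
  - destruct m as [|m]; [now exists [], (c :: P)|].
    assert (Hc : comm_cost (c :: P) = (if is_comm c then 1 else 0) + comm_cost P)
      by (unfold comm_cost; simpl; destruct (is_comm c); reflexivity).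
    destruct (IH (if is_comm c then m else S m)) as [Q [Q' [-> HQ]]]; [destruct (is_comm c); lia|].
    exists (c :: Q), Q'. split; [reflexivity|].
    replace (c :: Q) with ([c] ++ Q) by reflexivity. rewrite comm_cost_app, HQ.
    unfold comm_cost at 1; simpl. destruct (is_comm c); simpl; lia.
Qed.

Open Scope R_scope.

(* Cut off prefixes with exactly [M] loads and stores: each costs [M] and, like the remainder,
   performs at most [F] multiplies. *)
Lemma nmuls_mul_le_of_segments (P : list instr) (M : nat) (F : R) : (1 <= M)%nat ->
  (forall P1 P2 P3, P = P1 ++ P2 ++ P3 -> (comm_cost P2 <= M)%nat -> INR (nmuls P2) <= F) ->
  INR (nmuls P) * INR M <= F * (INR (comm_cost P) + INR M).
Proof.
  intros HM Hseg. assert (HF : 0 <= F) by (apply (Hseg [] [] P); auto; unfold comm_cost; simpl; lia).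
  pose proof (pos_INR M) as HM0.
  enough (H : forall c Q P1 P3, comm_cost Q = c -> P = P1 ++ Q ++ P3 ->
                INR (nmuls Q) * INR M <= F * (INR (comm_cost Q) + INR M))
    by (apply (H (comm_cost P) P [] []); auto; now rewrite app_nil_r).
  intros c. induction c as [c IH] using lt_wf_ind. intros Q P1 P3 Hc HP.
  pose proof (pos_INR (comm_cost Q)).
  destruct (Nat.le_gt_cases (comm_cost Q) M) as [Hle|Hgt].
  - pose proof (Hseg P1 Q P3 HP Hle). nra.
  - destruct (comm_cost_prefix Q M) as [Q1 [Q2 [-> HQ1]]]; [lia|].
    rewrite comm_cost_app in *.
    assert (H1 : INR (nmuls Q1) <= F) by (apply (Hseg P1 Q1 (Q2 ++ P3)); [now rewrite HP, <- app_assoc|lia]).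
    assert (H2 := IH (comm_cost Q2) ltac:(lia) Q2 (P1 ++ Q1) P3 eq_refl
                     ltac:(now rewrite HP, <- !app_assoc)).
    rewrite nmuls_app, !plus_INR, HQ1. nra.
Qed.

Close Scope R_scope.

Lemma prodn_pos Is : Forall (fun d => 1 <= d) Is -> 1 <= prodn Is.
Proof. induction 1; simpl; nia. Qed.

Lemma mttkrp_segment_bound Is n Rk M P st ms qs :
  2 <= length Is -> n < length Is -> 1 <= M ->
  Exec M (init_fast, init_slow Is n Rk) P st ms ->
  Permutation qs (points Is Rk) ->
  Forall2 (fun q m => Permutation m (operands Is n q)) qs ms ->
  (forall j r, j < nth n Is 0 -> r < Rk ->
     exists t, snd st (AB j r) = Some t /\ sum_of_products Is n (points_at Is n Rk j r) t) ->
  forall P1 P2 P3, P = P1 ++ P2 ++ P3 -> comm_cost P2 <= M ->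
  (INR (nmuls P2) <= Rpower (INR (3 * M)) (1 - / INR (length Is)) / INR (length Is) * INR (3 * M))%R.
Proof.
  intros HN Hn HM HE Hqs Hpair Hout P1 P2 P3 -> Hcost.
  apply Exec_app_inv in HE as [st1 [ms1 [ms23 [E1 [E23 ->]]]]].
  apply Exec_app_inv in E23 as [st2 [ms2 [ms3 [E2 [E3 ->]]]]].
  apply Forall2_app_inv_r in Hpair as [qs1 [qs23 [F1 [F23 ->]]]].
  apply Forall2_app_inv_r in F23 as [qs2 [qs3 [F2 [F3 ->]]]].
  rewrite <- (Exec_length _ _ _ _ _ E2).
  apply (segment_muls_le Is n Rk M HN Hn st1 st2 st P2 P3 ms1 ms2 ms3 qs1 qs2 qs3); auto.
  - exact (Exec_products_recorded _ _ _ _ _ _ E1 (products_recorded_init Is n Rk)).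
  - apply (Exec_fast_bounded _ _ _ _ _ E1). intros s _. reflexivity.
Qed.

Open Scope R_scope.

Lemma comm_lower_bound_of_segment_bound (N I Rk M C : nat) : (1 <= N)%nat -> (1 <= M)%nat ->
  INR (I * Rk) * INR M <= Rpower (INR (3 * M)) (1 - / INR N) / INR N * INR (3 * M) * (INR C + INR M) ->
  / Rpower 3 (2 - / INR N) * (INR N * INR I * INR Rk) / Rpower (INR M) (1 - / INR N) - INR M <= INR C.
Proof.
  intros HN HM H. assert (HNr : 0 < INR N) by (apply lt_0_INR; lia).
  assert (HMr : 0 < INR M) by (apply lt_0_INR; lia).
  set (a := Rpower 3 (1 - / INR N)). set (b := Rpower (INR M) (1 - / INR N)).
  assert (Ha : 0 < a) by apply exp_pos. assert (Hb : 0 < b) by apply exp_pos.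
  assert (E3M : Rpower (INR (3 * M)) (1 - / INR N) = a * b).
  { rewrite mult_INR. replace (INR 3) with 3 by (simpl; ring). symmetry. apply Rpower_mult_distr; lra. }
  assert (E3 : Rpower 3 (2 - / INR N) = 3 * a).
  { replace (2 - / INR N) with (1 + (1 - / INR N)) by ring. rewrite Rpower_plus, Rpower_1 by lra. reflexivity. }
  rewrite E3M, !mult_INR in H. rewrite E3. replace (INR 3) with 3 in H by (simpl; ring).
  assert (Hprod : INR N * INR I * INR Rk <= 3 * a * b * (INR C + INR M)).
  { apply (Rmult_le_reg_r (INR M / INR N)); [now apply Rdiv_lt_0_compat|].
    replace (INR N * INR I * INR Rk * (INR M / INR N)) with (INR I * INR Rk * INR M) by (field; lra).
    replace (3 * a * b * (INR C + INR M) * (INR M / INR N))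
      with (a * b / INR N * (3 * INR M) * (INR C + INR M)) by (field; lra).
    exact H. }
  enough (/ (3 * a) * (INR N * INR I * INR Rk) / b <= INR C + INR M) by lra.
  apply (Rmult_le_reg_r (3 * a * b)); [nra|].
  replace (/ (3 * a) * (INR N * INR I * INR Rk) / b * (3 * a * b)) with (INR N * INR I * INR Rk)
    by (field; lra).
  lra.
Qed.

Close Scope R_scope.

Theorem theorem1 (Is : list nat) (n Rk M : nat) (P : list instr) :
  2 <= length Is ->
  Forall (fun d => 1 <= d) Is ->
  1 <= Rk ->
  n < length Is ->
  is_mttkrp_alg Is n Rk M P ->
  (/ Rpower 3 (2 - / INR (length Is))
     * (INR (length Is) * INR (prodn Is) * INR Rk)
     / Rpower (INR M) (1 - / INR (length Is))
   - INR M <= INR (comm_cost P))%R.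
Proof.
  intros HN HIs HR Hn [f [g [ms [Hrun [[qs [Hqs Hpair]] Hout]]]]].
  apply run_Exec in Hrun.
  assert (Hmuls : nmuls P = prodn Is * Rk).
  { now rewrite <- (Exec_length _ _ _ _ _ Hrun), <- (Forall2_length Hpair), (Permutation_length Hqs),
      length_points. }
  pose proof (prodn_pos Is HIs).
  assert (HM : 1 <= M).
  { destruct M; [|lia]. apply Exec_no_fast_memory in Hrun as ->.
    apply Forall2_length in Hpair. rewrite (Permutation_length Hqs), length_points in Hpair.
    simpl in Hpair. nia. }
  pose proof (nmuls_mul_le_of_segments P M _ HM
                (mttkrp_segment_bound Is n Rk M P _ ms qs HN Hn HM Hrun Hqs Hpair Hout)) as Hseg.
  rewrite Hmuls in Hseg. apply comm_lower_bound_of_segment_bound; auto; lia.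
Qed.
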